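(* In the full-information matching model described in the context, under the ACR policy $\pi^{\mathrm{ACR}}$, for every time horizon $T\ge0$, every initial state $A\in\mathbb{Z}_{\ge0}^{\ell+1}$ and every $i\in\mathcal{L}$, $$1+\mathbb{E}[M^{\pi^{\mathrm{ACR}}}(T)\mid A^{(0)}=A]\ \ge\ \mathbb{E}[M^{\pi^{\mathrm{ACR}}}(T)\mid A^{(0)}=A+e_0]\ \ge\ \mathbb{E}[M^{\pi^{\mathrm{ACR}}}(T)\mid A^{(0)}=A+e_i],$$ where $e_i\in\mathbb{Z}_{\ge0}^{\ell+1}$ is the $i$-th unit vector.
   Context: Job/agent types are $\mathcal{L}=\{0,1,\dots,\ell\}$. Agents of type $i$ arrive by a Poisson process of rate $\lambda_i>0$, jobs of type $j$ by a Poisson process of rate $\mu_j>0$, all independent. A type $0$ agent can fulfill every job type; a type $i\ge1$ agent only type $i$ jobs. Unmatched jobs are lost at arrival. Waiting agents abandon independently at exponential rate $\theta>0$; matched agents leave. The state $A=(A_0,\dots,A_\ell)$ counts waiting agents of each type, $A^{(0)}$ is the initial state, and $M^\pi(T)$ is the number of matches in $[0,T]$ under policy $\pi$. The ACR policy assigns an arriving type $j$ job to a uniformly random waiting type $j$ agent if one exists, otherwise to a uniformly random waiting type $0$ agent if one exists, otherwise the job is lost. *)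

From Stdlib Require Import Reals List Arith.
From Coquelicot Require Import Coquelicot.
Open Scope R_scope.

(* Types are 0..l (l = \ell).  A state is a function nat -> nat; only the
   coordinates 0..l are meaningful (number of waiting agents of each type). *)
Definition state := nat -> nat.

Definition unitv (i : nat) : state := fun k => if Nat.eqb k i then 1%nat else 0%nat.
Definition addv (a b : state) : state := fun k => (a k + b k)%nat.
Definition upd (a : state) (i v : nat) : state := fun k => if Nat.eqb k i then v else a k.

(* An event of the CTMC out of state a: (rate, number of matches it produces, next state). *)
Definition event := (R * R * state)%type.

(* Agents of the same type are exchangeable, so the
   uniformly random choice of the agent does not affect the counts. *)
Definition acr_job (a : state) (j : nat) : R * state :=
  if Nat.ltb 0 (a j) then (1, upd a j (a j - 1))
  else if Nat.ltb 0 (a 0%nat) then (1, upd a 0 (a 0%nat - 1))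
  else (0, a).

Definition events (l : nat) (lam mu : nat -> R) (theta : R) (a : state) : list event :=
  map (fun i => (lam i, 0, upd a i (a i + 1)%nat)) (seq 0 (S l))
  ++ map (fun j => (mu j, fst (acr_job a j), snd (acr_job a j))) (seq 0 (S l))
  ++ map (fun i => (theta * INR (a i), 0, upd a i (a i - 1)%nat)) (seq 0 (S l)).

Definition qrate (l : nat) (lam mu : nat -> R) (theta : R) (a : state) : R :=
  fold_right (fun e acc => fst (fst e) + acc) 0 (events l lam mu theta a).

(* Vn n t a = expected number of matches among the first n events of the
   (jump) process that occur in [0,t], started from a.  First-jump
   decomposition: holding time ~ Exp(q(a)), event e chosen w.p. rate_e/q(a). *)
Fixpoint Vn (l : nat) (lam mu : nat -> R) (theta : R) (n : nat) (t : R) (a : state) : R :=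
  match n with
  | O => 0
  | S n' =>
      RInt (fun s =>
        exp (- qrate l lam mu theta a * s) *
        fold_right (fun e acc =>
            fst (fst e) * (snd (fst e) + Vn l lam mu theta n' (t - s) (snd e)) + acc)
          0 (events l lam mu theta a)) 0 t
  end.

Definition ExpMatches (l : nat) (lam mu : nat -> R) (theta : R) (T : R) (a : state) : Rbar :=
  Lim_seq (fun n => Vn l lam mu theta n T a).

From Stdlib Require Import Reals List Arith Lia Lra FunctionalExtensionality.
From Coquelicot Require Import Coquelicot.
Open Scope R_scope.

(* By induction on [n], every V = [Vn n t] satisfies
     V (c + e_k) <= 1 + V c        and        V (c + e_i) <= V (c + e_0).
   The inductive step couples the first jumps from the two compared states: arrivals, job
   arrivals and abandonments of the common agents are paired, and under ACR the paired outcomes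
   differ by at most the claimed amount.  When comparing c + e_k with c, the extra agent's
   abandonment (rate theta) has no partner; it leads back to c, so after uniformizing the chain
   from c with a fictitious self-jump at rate theta both chains jump at the same total rate. *)

Definition continuous_everywhere (f : R -> R) := forall x, continuous f x.

Lemma continuous_everywhere_const (c : R) : continuous_everywhere (fun _ => c).
Proof. intro x. apply continuous_const. Qed.

Lemma continuous_everywhere_plus (f g : R -> R) :
  continuous_everywhere f -> continuous_everywhere g ->
  continuous_everywhere (fun s => f s + g s).
Proof. intros Hf Hg x. apply (continuous_plus f g); auto. Qed.

Lemma continuous_everywhere_mult (f g : R -> R) :
  continuous_everywhere f -> continuous_everywhere g ->
  continuous_everywhere (fun s => f s * g s).
Proof. intros Hf Hg x. apply (continuous_mult f g); auto. Qed.

Lemma continuous_everywhere_exp_lin (a : R) : continuous_everywhere (fun s => exp (a * s)).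
Proof. intro x. apply (@ex_derive_continuous R_AbsRing R_NormedModule). auto_derive. auto. Qed.

Lemma continuous_everywhere_reflect (h : R -> R) (t : R) :
  continuous_everywhere h -> continuous_everywhere (fun s => h (t - s)).
Proof.
  intros Hh x. apply (continuous_comp (fun s => t - s) h); auto.
  apply (@ex_derive_continuous R_AbsRing R_NormedModule). auto_derive. auto.
Qed.

Lemma ex_RInt_continuous_everywhere (f : R -> R) (a b : R) :
  continuous_everywhere f -> ex_RInt f a b.
Proof. intro Hf. apply (@ex_RInt_continuous R_CompleteNormedModule). auto. Qed.

Lemma is_derive_RInt_0 (f : R -> R) (x : R) :
  continuous_everywhere f -> is_derive (fun t => RInt f 0 t) x (f x).
Proof.
  intro Hf. apply (is_derive_RInt f _ 0); auto.
  apply filter_forall. intro b. apply (@RInt_correct R_CompleteNormedModule).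
  apply ex_RInt_continuous_everywhere; auto.
Qed.

Lemma continuous_everywhere_RInt_0 (f : R -> R) :
  continuous_everywhere f -> continuous_everywhere (fun t => RInt f 0 t).
Proof.
  intros Hf x. apply (@ex_derive_continuous R_AbsRing R_NormedModule).
  eexists. apply is_derive_RInt_0; auto.
Qed.

Lemma continuous_everywhere_at (f : R -> R) (x : R) :
  continuous_everywhere f -> continuous f x.
Proof. auto. Qed.

Create HintDb continuity.
#[local] Hint Resolve continuous_everywhere_const continuous_everywhere_plus
  continuous_everywhere_mult continuous_everywhere_exp_lin continuous_everywhere_reflect
  continuous_everywhere_RInt_0 continuous_everywhere_at : continuity.

Definition expconv (q : R) (h : R -> R) (t : R) : R :=
  RInt (fun s => exp (- q * s) * h (t - s)) 0 t.

Lemma RInt_reflect (f : R -> R) (t : R) :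
  continuous_everywhere f -> RInt (fun s => f (t - s)) 0 t = RInt f 0 t.
Proof.
  intro Hf.
  assert (Hex : ex_RInt f 0 t) by (apply ex_RInt_continuous_everywhere; auto).
  assert (Hcomp := RInt_comp_lin f (-1) t 0 t).
  replace (-1 * 0 + t) with t in Hcomp by ring.
  replace (-1 * t + t) with 0 in Hcomp by ring.
  rewrite <- (opp_opp (RInt f 0 t)), (opp_RInt_swap f 0 t Hex).
  rewrite <- Hcomp by (apply ex_RInt_swap; exact Hex).
  rewrite (RInt_ext (fun y => scal (-1) (f (-1 * y + t))) (fun s => opp (f (t - s)))).
  2: { intros s _. replace (-1 * s + t) with (t - s) by ring. exact (scal_opp_one _). }
  rewrite (RInt_opp (fun s => f (t - s))), opp_opp; [reflexivity|].
  apply ex_RInt_continuous_everywhere. auto with continuity.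
Qed.

Lemma expconv_eq (q : R) (h : R -> R) (t : R) : continuous_everywhere h ->
  expconv q h t = exp (- q * t) * RInt (fun u => exp (q * u) * h u) 0 t.
Proof.
  intro Hh. unfold expconv.
  set (g := fun u => exp (- q * t) * (exp (q * u) * h u)).
  rewrite (RInt_ext _ (fun s => g (t - s))).
  2: { intros s _. unfold g. rewrite <- Rmult_assoc, <- exp_plus.
       now replace (- q * t + q * (t - s)) with (- q * s) by ring. }
  rewrite RInt_reflect by (unfold g; auto with continuity).
  apply (RInt_scal (fun u => exp (q * u) * h u)).
  apply ex_RInt_continuous_everywhere. auto with continuity.
Qed.

Lemma continuous_everywhere_expconv (q : R) (h : R -> R) :
  continuous_everywhere h -> continuous_everywhere (expconv q h).
Proof.
  intros Hh x.
  apply (continuous_ext (fun t => exp (- q * t) * RInt (fun u => exp (q * u) * h u) 0 t)).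
  - intro t. symmetry. apply expconv_eq; auto.
  - auto with continuity.
Qed.
#[local] Hint Resolve continuous_everywhere_expconv : continuity.

Lemma ex_RInt_expconv_integrand (q : R) (h : R -> R) (t : R) :
  continuous_everywhere h -> ex_RInt (fun s => exp (- q * s) * h (t - s)) 0 t.
Proof. intro Hh. apply ex_RInt_continuous_everywhere. auto with continuity. Qed.

Lemma expconv_le (q : R) (h1 h2 : R -> R) (t : R) : 0 <= t ->
  continuous_everywhere h1 -> continuous_everywhere h2 ->
  (forall r, 0 <= r <= t -> h1 r <= h2 r) -> expconv q h1 t <= expconv q h2 t.
Proof.
  intros Ht H1 H2 Hle. apply RInt_le; auto using ex_RInt_expconv_integrand.
  intros s Hs. apply Rmult_le_compat_l; [apply Rlt_le, exp_pos|]. apply Hle. lra.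
Qed.

Lemma expconv_nonneg (q : R) (h : R -> R) (t : R) : 0 <= t -> continuous_everywhere h ->
  (forall r, 0 <= r <= t -> 0 <= h r) -> 0 <= expconv q h t.
Proof.
  intros Ht Hh Hpos. apply RInt_ge_0; auto using ex_RInt_expconv_integrand.
  intros s Hs. apply Rmult_le_pos; [apply Rlt_le, exp_pos|]. apply Hpos. lra.
Qed.

Lemma expconv_plus (q : R) (h1 h2 : R -> R) (t : R) :
  continuous_everywhere h1 -> continuous_everywhere h2 ->
  expconv q (fun r => h1 r + h2 r) t = expconv q h1 t + expconv q h2 t.
Proof.
  intros H1 H2. unfold expconv.
  rewrite <- (RInt_plus (V := R_CompleteNormedModule)) by auto using ex_RInt_expconv_integrand.
  apply RInt_ext. intros s _. cbv [plus]; simpl. ring.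
Qed.

(* Uniformization: a holding time of rate [q] is one of rate [q + c] after which, with the
   extra rate [c], a fictitious self-jump restarts the clock. *)
Lemma expconv_add_rate (q c : R) (h : R -> R) (t : R) : continuous_everywhere h ->
  expconv q h t = expconv (q + c) (fun r => h r + c * expconv q h r) t.
Proof.
  intro Hh.
  set (G := fun u => RInt (fun s => exp (q * s) * h s) 0 u : R).
  assert (HG : forall u, expconv q h u = exp (- q * u) * G u) by (intro; apply expconv_eq; auto).
  rewrite (expconv_eq (q + c)) by auto with continuity.
  rewrite (RInt_ext _ (fun u => c * exp (c * u) * G u + exp (c * u) * (exp (q * u) * h u))).
  2: { intros u _. rewrite HG.
       replace ((q + c) * u) with (c * u + q * u) by ring.
       rewrite !exp_plus. replace (- q * u) with (- (q * u)) by ring. rewrite exp_Ropp.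
       (* [RInt_ext] states the equation in the normed-module carrier; [field] wants [R]. *)
       match goal with |- ?a = ?b => change (@eq R a b) end.
       field. apply Rgt_not_eq, exp_pos. }
  rewrite (is_RInt_unique _ 0 t (minus (exp (c * t) * G t) (exp (c * 0) * G 0))).
  2: { apply (is_RInt_derive (fun u => exp (c * u) * G u)).
       - intros u _. apply (is_derive_mult (fun u => exp (c * u)) G).
         + auto_derive; auto; ring.
         + apply (is_derive_RInt_0 (fun s => exp (q * s) * h s)). auto with continuity.
         + intros; apply Rmult_comm.
       - intros u _. unfold G. auto 6 with continuity. }
  assert (G_0 : G 0 = 0) by exact (RInt_point 0 (fun s => exp (q * s) * h s)).
  rewrite HG, G_0. cbv [minus plus opp]; simpl.
  replace (- (q + c) * t) with (- q * t + - (c * t)) by ring.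
  rewrite exp_plus, exp_Ropp. field. apply Rgt_not_eq, exp_pos.
Qed.

Lemma expconv_const_le_one (q c t : R) : 0 <= q -> 0 < c -> 0 <= t ->
  expconv (q + c) (fun _ => q) t <= 1.
Proof.
  intros Hq Hc Ht. rewrite expconv_eq by auto with continuity.
  set (k := q + c).
  rewrite (is_RInt_unique _ 0 t (minus (q / k * exp (k * t)) (q / k * exp (k * 0)))).
  2: { apply (is_RInt_derive (fun u => q / k * exp (k * u))).
       - intros u _. auto_derive; auto. field. unfold k; lra.
       - intros u _. auto with continuity. }
  cbv [minus plus opp]; simpl. rewrite Rmult_0_r, exp_0.
  replace (exp (- k * t) * (q / k * exp (k * t) + - (q / k * 1)))
    with (q / k * (1 - exp (- k * t))).
  2: { replace (- k * t) with (- (k * t)) by ring. rewrite exp_Ropp.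
       field. split; [unfold k; lra | apply Rgt_not_eq, exp_pos]. }
  assert (0 < exp (- k * t)) by apply exp_pos.
  assert (Hk : 0 < k) by (unfold k; lra).
  assert (q / k * k = q) by (field; lra).
  assert (0 <= q / k) by (apply Rmult_le_pos; [lra | apply Rlt_le, Rinv_0_lt_compat; lra]).
  assert (q / k <= 1) by (unfold k in *; nra).
  nra.
Qed.

Ltac case_eqb :=
  repeat match goal with
         | |- context [Nat.eqb ?x ?y] => destruct (Nat.eqb_spec x y); subst
         | H : context [Nat.eqb ?x ?y] |- _ => destruct (Nat.eqb_spec x y); subst
         end.

Ltac state_eq :=
  apply functional_extensionality; intro; unfold addv, unitv, upd in *; case_eqb; lia.

Ltac state_absurd := exfalso; unfold addv, unitv in *; case_eqb; lia.

Lemma addv_unitv_self (b : state) (k : nat) : addv b (unitv k) k = (b k + 1)%nat.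
Proof. unfold addv, unitv. now rewrite Nat.eqb_refl. Qed.

Lemma addv_unitv_other (b : state) (j k : nat) : j <> k -> addv b (unitv k) j = b j.
Proof. intro Hjk. unfold addv, unitv. rewrite (proj2 (Nat.eqb_neq j k) Hjk). lia. Qed.

Lemma upd_succ_addv_unitv (b : state) (j k : nat) :
  upd (addv b (unitv k)) j (addv b (unitv k) j + 1) = addv (upd b j (b j + 1)) (unitv k).
Proof. state_eq. Qed.

(* [upd a j (a j - 1)] is junk when [a j = 0] (truncated subtraction); the factor [INR (a j)]
   then kills it. *)
Lemma INR_mult_pred (F : state -> R) (a : state) (j : nat) :
  INR (a j) * F a = INR (a j) * F (addv (upd a j (a j - 1)) (unitv j)).
Proof.
  destruct (a j) as [|m] eqn:Ej; [simpl; ring|].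
  replace (addv (upd a j (S m - 1)) (unitv j)) with a by state_eq. reflexivity.
Qed.

Variant acr_job_spec (a : state) (j : nat) : R * state -> Prop :=
  | AcrOwn : (0 < a j)%nat -> acr_job_spec a j (1, upd a j (a j - 1))
  | AcrFlexible : a j = 0%nat -> (0 < a 0%nat)%nat -> acr_job_spec a j (1, upd a 0 (a 0%nat - 1))
  | AcrLost : a j = 0%nat -> a 0%nat = 0%nat -> acr_job_spec a j (0, a).

Lemma acr_jobP (a : state) (j : nat) : acr_job_spec a j (acr_job a j).
Proof.
  unfold acr_job.
  destruct (Nat.ltb_spec 0 (a j)); [now constructor|].
  destruct (Nat.ltb_spec 0 (a 0%nat)); constructor; lia.
Qed.

Section Coupling.
Variables (l : nat) (V : state -> R).

Definition gain_le_one : Prop :=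
  forall c k, (k <= l)%nat -> V (addv c (unitv k)) <= 1 + V c.

Definition flexible_dominates : Prop :=
  forall c i, (i <= l)%nat -> V (addv c (unitv i)) <= V (addv c (unitv 0)).

Definition job_value (a : state) (j : nat) : R := fst (acr_job a j) + V (snd (acr_job a j)).

Definition abandon_value (a : state) (j : nat) : R := INR (a j) * V (upd a j (a j - 1)).

Hypothesis Hgain : gain_le_one.

Lemma outcome_add_le (m : R) (k : nat) (X Y : state) :
  X = addv Y (unitv k) -> (k <= l)%nat -> m + V X <= m + V Y + 1.
Proof. intros -> Hk. specialize (Hgain Y k Hk). lra. Qed.

Lemma outcome_match_le (X Y : state) : X = Y -> 1 + V X <= 0 + V Y + 1.
Proof. intros ->. lra. Qed.

Lemma job_value_add_le (b : state) (k j : nat) : (k <= l)%nat ->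
  job_value (addv b (unitv k)) j <= job_value b j + 1.
Proof.
  intro Hk. unfold job_value.
  destruct (acr_jobP (addv b (unitv k)) j); destruct (acr_jobP b j); cbn [fst snd];
  first
    [ state_absurd
    | apply (outcome_add_le _ k); [state_eq | exact Hk]
    | apply (outcome_add_le _ 0); [state_eq | lia]
    | apply outcome_match_le; state_eq ].
Qed.

Lemma abandon_value_add_le (b : state) (k j : nat) : (k <= l)%nat ->
  abandon_value (addv b (unitv k)) j
  <= abandon_value b j + INR (b j) + (if Nat.eqb j k then V b else 0).
Proof.
  intro Hk. unfold abandon_value. destruct (Nat.eqb_spec j k) as [->|Hjk].
  - rewrite addv_unitv_self.
    replace (upd (addv b (unitv k)) k (b k + 1 - 1)) with b by state_eq.
    rewrite plus_INR, INR_1, Rmult_plus_distr_r, (INR_mult_pred V b k).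
    pose proof (Hgain (upd b k (b k - 1)) k Hk). pose proof (pos_INR (b k)). nra.
  - rewrite addv_unitv_other by exact Hjk.
    replace (upd (addv b (unitv k)) j (b j - 1)) with (addv (upd b j (b j - 1)) (unitv k))
      by state_eq.
    pose proof (Hgain (upd b j (b j - 1)) k Hk). pose proof (pos_INR (b j)). nra.
Qed.

Hypothesis Hflex : flexible_dominates.

Lemma outcome_flexible_le (m : R) (i : nat) (X Y : state) : (i <= l)%nat ->
  X = addv (upd Y 0 (Y 0%nat - 1)) (unitv i) -> Y = addv (upd Y 0 (Y 0%nat - 1)) (unitv 0) ->
  m + V X <= m + V Y.
Proof.
  intros Hi EX EY. pose proof (Hflex (upd Y 0 (Y 0%nat - 1)) i Hi) as H.
  rewrite <- EX, <- EY in H. lra.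
Qed.

Lemma outcome_eq_le (m : R) (X Y : state) : X = Y -> m + V X <= m + V Y.
Proof. intros ->. lra. Qed.

Lemma outcome_unmatched_le (i : nat) (X Y : state) :
  X = addv Y (unitv i) -> (i <= l)%nat -> 0 + V X <= 1 + V Y.
Proof. intros -> Hi. specialize (Hgain Y i Hi). lra. Qed.

Lemma job_value_flexible_le (b : state) (i j : nat) : (i <= l)%nat ->
  job_value (addv b (unitv i)) j <= job_value (addv b (unitv 0)) j.
Proof.
  intro Hi. destruct (Nat.eq_dec i 0) as [->|Hi0]; [lra|]. unfold job_value.
  destruct (acr_jobP (addv b (unitv i)) j); destruct (acr_jobP (addv b (unitv 0)) j); cbn [fst snd];
  first
    [ state_absurd
    | apply outcome_eq_le; state_eq
    | apply (outcome_flexible_le _ i); [exact Hi | state_eq | state_eq]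
    | apply (outcome_unmatched_le i); [state_eq | exact Hi] ].
Qed.

Lemma abandon_value_flexible_le (b : state) (i j : nat) : (i <= l)%nat -> (i <> 0)%nat ->
  abandon_value (addv b (unitv i)) j + (if Nat.eqb j 0 then V b else 0)
  <= abandon_value (addv b (unitv 0)) j + (if Nat.eqb j i then V b else 0).
Proof.
  intros Hi Hi0. unfold abandon_value.
  pose proof (Hflex (upd b j (b j - 1)) i Hi). pose proof (pos_INR (b j)).
  destruct (Nat.eqb_spec j 0) as [->|Hj0]; [|destruct (Nat.eqb_spec j i) as [->|Hji]].
  - rewrite addv_unitv_other, addv_unitv_self by lia.
    replace (upd (addv b (unitv 0)) 0 (b 0%nat + 1 - 1)) with b by state_eq.
    replace (upd (addv b (unitv i)) 0 (b 0%nat - 1)) with (addv (upd b 0 (b 0%nat - 1)) (unitv i))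
      by state_eq.
    rewrite (proj2 (Nat.eqb_neq 0 i)) by lia.
    rewrite plus_INR, INR_1, Rmult_plus_distr_r, (INR_mult_pred V b 0). nra.
  - rewrite addv_unitv_self, addv_unitv_other by exact Hi0.
    replace (upd (addv b (unitv i)) i (b i + 1 - 1)) with b by state_eq.
    replace (upd (addv b (unitv 0)) i (b i - 1)) with (addv (upd b i (b i - 1)) (unitv 0))
      by state_eq.
    rewrite plus_INR, INR_1, Rmult_plus_distr_r, (INR_mult_pred V b i). nra.
  - rewrite !addv_unitv_other by assumption.
    replace (upd (addv b (unitv i)) j (b j - 1)) with (addv (upd b j (b j - 1)) (unitv i))
      by state_eq.
    replace (upd (addv b (unitv 0)) j (b j - 1)) with (addv (upd b j (b j - 1)) (unitv 0))
      by state_eq.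
    nra.
Qed.
End Coupling.

Definition lsum {X : Type} (F : X -> R) (L : list X) : R :=
  fold_right (fun x acc => F x + acc) 0 L.

Lemma lsum_app {X : Type} (F : X -> R) (L1 L2 : list X) :
  lsum F (L1 ++ L2) = lsum F L1 + lsum F L2.
Proof. induction L1 as [|x L1 IH]; unfold lsum in *; simpl; [ring|]. rewrite IH. ring. Qed.

Lemma lsum_map {X Y : Type} (F : Y -> R) (g : X -> Y) (L : list X) :
  lsum F (map g L) = lsum (fun x => F (g x)) L.
Proof. induction L as [|x L IH]; unfold lsum in *; simpl; [reflexivity|]. now rewrite IH. Qed.

Lemma lsum_plus {X : Type} (F G : X -> R) (L : list X) :
  lsum (fun x => F x + G x) L = lsum F L + lsum G L.
Proof. induction L as [|x L IH]; unfold lsum in *; simpl; [ring|]. rewrite IH. ring. Qed.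

Lemma lsum_ext {X : Type} (F G : X -> R) (L : list X) :
  (forall x, F x = G x) -> lsum F L = lsum G L.
Proof. intro H. f_equal. now apply functional_extensionality. Qed.

Lemma lsum_le {X : Type} (F G : X -> R) (L : list X) :
  (forall x, In x L -> F x <= G x) -> lsum F L <= lsum G L.
Proof.
  induction L as [|x L IH]; intro H; unfold lsum in *; simpl; [lra|].
  apply Rplus_le_compat; [apply H; now left | apply IH; intros; apply H; now right].
Qed.

Lemma lsum_nonneg {X : Type} (F : X -> R) (L : list X) :
  (forall x, In x L -> 0 <= F x) -> 0 <= lsum F L.
Proof.
  induction L as [|x L IH]; intro H; unfold lsum in *; simpl; [lra|].
  apply Rplus_le_le_0_compat; [apply H; now left | apply IH; intros; apply H; now right].
Qed.

Lemma lsum_indicator_seq (k s n : nat) (c : R) :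
  lsum (fun j => if Nat.eqb j k then c else 0) (seq s n) =
  if andb (Nat.leb s k) (Nat.ltb k (s + n)) then c else 0.
Proof.
  revert s. induction n as [|n IH]; intro s; unfold lsum in *; simpl.
  - destruct (Nat.leb_spec s k), (Nat.ltb_spec k (s + 0)); simpl; lia || lra.
  - rewrite IH. destruct (Nat.eqb_spec s k), (Nat.leb_spec (S s) k), (Nat.ltb_spec k (S s + n)),
      (Nat.leb_spec s k), (Nat.ltb_spec k (s + S n)); simpl; lia || lra.
Qed.

Definition types (l : nat) : list nat := seq 0 (S l).

Lemma in_types (l j : nat) : In j (types l) <-> (j <= l)%nat.
Proof. unfold types. rewrite in_seq. lia. Qed.

Lemma lsum_indicator (l k : nat) (c : R) : (k <= l)%nat ->
  lsum (fun j => if Nat.eqb j k then c else 0) (types l) = c.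
Proof.
  intro Hk. unfold types. rewrite lsum_indicator_seq.
  destruct (Nat.leb_spec 0 k), (Nat.ltb_spec k (0 + S l)); simpl; lia || reflexivity.
Qed.

Section Generator.
Variables (l : nat) (lam mu : nat -> R) (theta : R).

Definition jump_value (V : state -> R) (a : state) : R :=
  lsum (fun e : event => fst (fst e) * (snd (fst e) + V (snd e))) (events l lam mu theta a).

Definition type_value (V : state -> R) (a : state) (j : nat) : R :=
  lam j * V (upd a j (a j + 1)) + mu j * job_value V a j + theta * abandon_value V a j.

Definition type_rate (a : state) (j : nat) : R := lam j + mu j + theta * INR (a j).

Lemma jump_value_eq (V : state -> R) (a : state) :
  jump_value V a = lsum (type_value V a) (types l).
Proof.
  unfold jump_value, events, type_value, job_value, abandon_value.
  rewrite !lsum_app, !lsum_map, !lsum_plus. cbn [fst snd]. unfold types.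
  rewrite Rplus_assoc. f_equal; [|f_equal]; apply lsum_ext; intro; ring.
Qed.

Lemma qrate_eq (a : state) : qrate l lam mu theta a = lsum (type_rate a) (types l).
Proof.
  change (qrate l lam mu theta a)
    with (lsum (fun e : event => fst (fst e)) (events l lam mu theta a)).
  unfold events, type_rate. rewrite !lsum_app, !lsum_map, !lsum_plus. cbn [fst].
  rewrite Rplus_assoc. reflexivity.
Qed.

Lemma continuous_jump_value (Vr : R -> state -> R) (a : state) :
  (forall c, continuous_everywhere (fun r => Vr r c)) ->
  continuous_everywhere (fun r => jump_value (Vr r) a).
Proof.
  intro H. unfold jump_value.
  induction (events l lam mu theta a) as [|e L IH]; unfold lsum in *; simpl.
  - auto with continuity.
  - apply (continuous_everywhere_plus (fun r => fst (fst e) * (snd (fst e) + Vr r (snd e))));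
      auto with continuity.
Qed.

Hypothesis Hlam : forall j, (j <= l)%nat -> 0 <= lam j.
Hypothesis Hmu : forall j, (j <= l)%nat -> 0 <= mu j.
Hypothesis Htheta : 0 <= theta.

Lemma type_rate_nonneg (a : state) (j : nat) : (j <= l)%nat -> 0 <= type_rate a j.
Proof.
  intro Hj. unfold type_rate.
  assert (0 <= theta * INR (a j)) by (apply Rmult_le_pos; [exact Htheta | apply pos_INR]).
  specialize (Hlam j Hj). specialize (Hmu j Hj). lra.
Qed.

Lemma qrate_nonneg (a : state) : 0 <= qrate l lam mu theta a.
Proof.
  rewrite qrate_eq. apply lsum_nonneg. intros j Hj. apply type_rate_nonneg, in_types, Hj.
Qed.

Lemma qrate_addv_unitv (b : state) (k : nat) : (k <= l)%nat ->
  qrate l lam mu theta (addv b (unitv k)) = qrate l lam mu theta b + theta.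
Proof.
  intro Hk. rewrite !qrate_eq.
  transitivity (lsum (fun j => type_rate b j + (if Nat.eqb j k then theta else 0)) (types l)).
  - apply lsum_ext. intro j. unfold type_rate, addv, unitv.
    destruct (Nat.eqb j k); rewrite ?Nat.add_0_r, ?plus_INR, ?INR_1; ring.
  - rewrite lsum_plus, lsum_indicator by exact Hk. reflexivity.
Qed.

Lemma type_value_le (V W : state -> R) (a : state) (j : nat) : (j <= l)%nat ->
  (forall c, V c <= W c) -> type_value V a j <= type_value W a j.
Proof.
  intros Hj H. unfold type_value, job_value, abandon_value.
  pose proof (pos_INR (a j)).
  repeat apply Rplus_le_compat; repeat apply Rmult_le_compat_l; auto using Rplus_le_compat_l.
Qed.

Lemma jump_value_le (V W : state -> R) (a : state) :
  (forall c, V c <= W c) -> jump_value V a <= jump_value W a.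
Proof.
  intro H. rewrite !jump_value_eq. apply lsum_le. intros j Hj.
  apply type_value_le; [apply in_types, Hj | exact H].
Qed.

Lemma jump_value_nonneg (V : state -> R) (a : state) :
  (forall c, 0 <= V c) -> 0 <= jump_value V a.
Proof.
  intro H. rewrite jump_value_eq. apply lsum_nonneg. intros j Hj. apply in_types in Hj.
  unfold type_value, job_value, abandon_value.
  assert (0 <= fst (acr_job a j)) by (destruct (acr_jobP a j); simpl; lra).
  pose proof (pos_INR (a j)).
  repeat apply Rplus_le_le_0_compat; repeat apply Rmult_le_pos; auto using Rplus_le_le_0_compat.
Qed.

Lemma type_value_add_le (V W : state -> R) (b : state) (k j : nat) :
  gain_le_one l V -> V b <= W b -> (k <= l)%nat -> (j <= l)%nat ->
  type_value V (addv b (unitv k)) j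
  <= type_value V b j + type_rate b j + (if Nat.eqb j k then theta * W b else 0).
Proof.
  intros Hgain HVW Hk Hj. unfold type_value, type_rate.
  rewrite upd_succ_addv_unitv.
  pose proof (Hgain (upd b j (b j + 1)) k Hk) as Harrival.
  pose proof (job_value_add_le l V Hgain b k j Hk) as Hjob.
  pose proof (abandon_value_add_le l V Hgain b k j Hk) as Habandon.
  specialize (Hlam j Hj). specialize (Hmu j Hj).
  destruct (Nat.eqb j k); nra.
Qed.

Lemma jump_value_add_le (V W : state -> R) (b : state) (k : nat) :
  gain_le_one l V -> V b <= W b -> (k <= l)%nat ->
  jump_value V (addv b (unitv k)) <= jump_value V b + qrate l lam mu theta b + theta * W b.
Proof.
  intros Hgain HVW Hk. rewrite !jump_value_eq, qrate_eq.
  rewrite <- (lsum_indicator l k (theta * W b) Hk), <- !lsum_plus.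
  apply lsum_le. intros j Hj. apply type_value_add_le; auto. now apply in_types.
Qed.

Lemma type_value_flexible_le (V : state -> R) (b : state) (i j : nat) :
  gain_le_one l V -> flexible_dominates l V -> (i <= l)%nat -> (i <> 0)%nat -> (j <= l)%nat ->
  type_value V (addv b (unitv i)) j + (if Nat.eqb j 0 then theta * V b else 0)
  <= type_value V (addv b (unitv 0)) j + (if Nat.eqb j i then theta * V b else 0).
Proof.
  intros Hgain Hflex Hi Hi0 Hj. unfold type_value.
  rewrite !upd_succ_addv_unitv.
  pose proof (Hflex (upd b j (b j + 1)) i Hi) as Harrival.
  pose proof (job_value_flexible_le l V Hgain Hflex b i j Hi) as Hjob.
  pose proof (abandon_value_flexible_le l V Hflex b i j Hi Hi0) as Habandon.
  specialize (Hlam j Hj). specialize (Hmu j Hj).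
  destruct (Nat.eqb j 0), (Nat.eqb j i); nra.
Qed.

Lemma jump_value_flexible_le (V : state -> R) (b : state) (i : nat) :
  gain_le_one l V -> flexible_dominates l V -> (i <= l)%nat ->
  jump_value V (addv b (unitv i)) <= jump_value V (addv b (unitv 0)).
Proof.
  intros Hgain Hflex Hi. destruct (Nat.eq_dec i 0) as [->|Hi0]; [lra|].
  rewrite !jump_value_eq.
  assert (H : lsum (fun j => type_value V (addv b (unitv i)) j
                             + (if Nat.eqb j 0 then theta * V b else 0)) (types l)
              <= lsum (fun j => type_value V (addv b (unitv 0)) j
                             + (if Nat.eqb j i then theta * V b else 0)) (types l)).
  { apply lsum_le. intros j Hj. apply type_value_flexible_le; auto. now apply in_types. }
  rewrite !lsum_plus, !lsum_indicator in H by lia. lra.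
Qed.

End Generator.

Section Value.
Variables (l : nat) (lam mu : nat -> R) (theta : R).
Hypothesis Hlam : forall j, (j <= l)%nat -> 0 <= lam j.
Hypothesis Hmu : forall j, (j <= l)%nat -> 0 <= mu j.
Hypothesis Htheta : 0 < theta.

Let V := Vn l lam mu theta.
Let q := qrate l lam mu theta.
Let J := jump_value l lam mu theta.

Lemma Vn_succ (n : nat) (t : R) (a : state) :
  V (S n) t a = expconv (q a) (fun r => J (V n r) a) t.
Proof. reflexivity. Qed.

Lemma continuous_Vn (n : nat) (a : state) : continuous_everywhere (fun t => V n t a).
Proof.
  revert a. induction n as [|n IH]; intro a.
  - change (continuous_everywhere (fun _ : R => 0)). apply continuous_everywhere_const.
  - change (continuous_everywhere (expconv (q a) (fun r => J (V n r) a))).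
    apply continuous_everywhere_expconv, continuous_jump_value, IH.
Qed.

Lemma continuous_jump_value_Vn (n : nat) (a : state) : continuous_everywhere (fun r => J (V n r) a).
Proof. apply continuous_jump_value. intro c. apply continuous_Vn. Qed.

Lemma Vn_le_succ (n : nat) (t : R) (a : state) : 0 <= t -> V n t a <= V (S n) t a.
Proof.
  revert t a. induction n as [|n IH]; intros t a Ht; rewrite !Vn_succ.
  - apply expconv_nonneg; auto using continuous_jump_value_Vn.
    intros r _. apply jump_value_nonneg; auto; [lra|]. intro c. apply Rle_refl.
  - apply expconv_le; auto using continuous_jump_value_Vn.
    intros r Hr. apply jump_value_le; auto; [lra|]. intro c. apply IH. lra.
Qed.

Lemma Vn_succ_gain_le_one (n : nat) (t : R) : 0 <= t ->
  (forall r, 0 <= r -> gain_le_one l (V n r)) -> gain_le_one l (V (S n) t).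
Proof.
  intros Ht Hgain b k Hk.
  set (h := fun r => J (V n r) b).
  assert (Hh : continuous_everywhere h) by apply continuous_jump_value_Vn.
  assert (Hq : 0 <= q b) by (apply qrate_nonneg; auto; lra).
  rewrite !Vn_succ. unfold q at 1. rewrite qrate_addv_unitv by exact Hk.
  apply Rle_trans with (expconv (q b + theta) (fun r => (h r + theta * expconv (q b) h r) + q b) t).
  - apply expconv_le; auto using continuous_jump_value_Vn with continuity.
    intros r Hr. change (expconv (q b) h r) with (V (S n) r b). unfold h.
    pose proof (jump_value_add_le l lam mu theta Hlam Hmu ltac:(lra) (V n r) (V (S n) r) b k
                  (Hgain r (proj1 Hr)) (Vn_le_succ n r b (proj1 Hr)) Hk).
    unfold J, q in *. lra.
  - rewrite expconv_plus, <- expconv_add_rate by auto with continuity.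
    pose proof (expconv_const_le_one (q b) theta t Hq Htheta Ht). fold h. lra.
Qed.

Lemma Vn_succ_flexible_dominates (n : nat) (t : R) : 0 <= t ->
  (forall r, 0 <= r -> gain_le_one l (V n r)) ->
  (forall r, 0 <= r -> flexible_dominates l (V n r)) ->
  flexible_dominates l (V (S n) t).
Proof.
  intros Ht Hgain Hflex b i Hi.
  rewrite !Vn_succ. unfold q. rewrite !qrate_addv_unitv by lia.
  apply expconv_le; auto using continuous_jump_value_Vn.
  intros r Hr. apply jump_value_flexible_le; auto; [lra | apply Hgain | apply Hflex]; lra.
Qed.

Lemma Vn_gain_le_one_flexible_dominates (n : nat) :
  (forall t, 0 <= t -> gain_le_one l (V n t)) /\
  (forall t, 0 <= t -> flexible_dominates l (V n t)).
Proof.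
  induction n as [|n [IHgain IHflex]].
  - split; intros t _ c k _; unfold V; simpl; lra.
  - split; intros t Ht.
    + now apply Vn_succ_gain_le_one.
    + now apply Vn_succ_flexible_dominates.
Qed.

End Value.

Lemma Lim_seq_const_plus (c : R) (u : nat -> R) :
  ex_lim_seq u -> Lim_seq (fun n => c + u n) = Rbar_plus c (Lim_seq u).
Proof.
  intro Hu. rewrite Lim_seq_plus, Lim_seq_const; auto using ex_lim_seq_const.
  rewrite Lim_seq_const. now destruct (Lim_seq u).
Qed.

Theorem lemma1 (l : nat) (lam mu : nat -> R) (theta : R)
  (Hlam : forall i, (i <= l)%nat -> 0 < lam i)
  (Hmu : forall j, (j <= l)%nat -> 0 < mu j)
  (Htheta : 0 < theta)
  (T : R) (HT : 0 <= T) (A : state) (i : nat) (Hi : (i <= l)%nat) :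
  Rbar_le (ExpMatches l lam mu theta T (addv A (unitv 0)))
          (Rbar_plus (Finite 1) (ExpMatches l lam mu theta T A)) /\
  Rbar_le (ExpMatches l lam mu theta T (addv A (unitv i)))
          (ExpMatches l lam mu theta T (addv A (unitv 0))).
Proof.
  assert (Hlam' : forall j, (j <= l)%nat -> 0 <= lam j) by (intros; now apply Rlt_le, Hlam).
  assert (Hmu' : forall j, (j <= l)%nat -> 0 <= mu j) by (intros; now apply Rlt_le, Hmu).
  pose proof (fun n => Vn_gain_le_one_flexible_dominates l lam mu theta Hlam' Hmu' Htheta n) as Hvn.
  unfold ExpMatches. split.
  - rewrite <- Lim_seq_const_plus.
    + apply Lim_seq_le_loc. exists 0%nat. intros n _. apply (proj1 (Hvn n)); lia || assumption.
    + apply ex_lim_seq_incr. intro n. now apply Vn_le_succ.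
  - apply Lim_seq_le_loc. exists 0%nat. intros n _. now apply (proj2 (Hvn n)).
Qed.
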